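(* Let $d\ge 1$ and $n\ge 1$ be integers, let $R=\mathbb{Q}[a_{i,j}:1\le i,j\le n]$, and fix $i,j,l\in\{1,\dots,n\}$ (not necessarily distinct). Then \[ z(\mathrm{fern}_{d,n},\mu(i,j,l))=(B^n)_{i,j}, \] where $B$ is the $n\times n$ matrix over $R$ with entries $B_{u,v}=a_{u,v}\,a_{u,l}^{\,d-1}$.
   Context: $\mathrm{fern}_{d,n}$ is the rooted plane tree with a path $v_0,v_1,\dots,v_n$ where $v_0$ is the root, each of $v_0,\dots,v_{n-1}$ has exactly $d$ children of which the leftmost is $v_{k+1}$ and the other $d-1$ are leaves, and $v_n$ is a leaf (so it has $n$ vertices with $d$ children, each such vertex has at most one non-leaf child, and that child is leftmost). A labeling of a rooted plane tree $T$ is a map $\lambda\colon V(T)\to\{1,\dots,n\}$; for an edge $e$ from parent $v$ to child $u$ put $w(e,\lambda)=a_{\lambda(v),\lambda(u)}$ and $w(T,\lambda)=\prod_{e}w(e,\lambda)$. A root-leaf labeling is a map $\mu$ from the set consisting of the root and the leaves of $T$ to $\{1,\dots,n\}$, and $z(T,\mu)=\sum_{\lambda}w(T,\lambda)$, the sum over all labelings $\lambda$ of $T$ agreeing with $\mu$ on the root and leaves. $\mu(i,j,l)$ is the root-leaf labeling of $\mathrm{fern}_{d,n}$ that labels the root $i$, the leaf $v_n$ by $j$, and every other leaf by $l$. *)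

From HB Require Import structures.
From mathcomp Require Import all_boot all_order all_algebra.
From mathcomp Require Export mpoly.
Set Implicit Arguments.
Unset Strict Implicit.
Unset Printing Implicit Defensive.
Import GRing.Theory.
Local Open Scope ring_scope.

Inductive ptree := Node of seq ptree.

(* Vertices are addresses: the root is [::]; the k-th child (0-based,
   left to right) of the vertex with address p has address rcons p k. *)
Fixpoint vertices (t : ptree) : seq (seq nat) :=
  let: Node cs := t in
  [::] :: (fix aux (k : nat) (cs : seq ptree) : seq (seq nat) :=
             match cs with
             | [::] => [::]
             | c :: cs' => map (cons k) (vertices c) ++ aux k.+1 cs'
             end) 0%N cs.

Definition vtx (t : ptree) := seq_sub (vertices t).

Definition is_child (v u : seq nat) : bool :=
  (size u == (size v).+1) && (take (size v) u == v).

Definition is_root (t : ptree) (v : vtx t) : bool := val v == [::].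
Definition is_leaf (t : ptree) (v : vtx t) : bool :=
  [forall u : vtx t, ~~ is_child (val v) (val u)].

Definition weight {R : comPzRingType} (n : nat) (a : 'I_n -> 'I_n -> R)
    (t : ptree) (lam : {ffun vtx t -> 'I_n}) : R :=
  \prod_(v : vtx t) \prod_(u : vtx t | is_child (val v) (val u)) a (lam v) (lam u).

(* A root-leaf labeling mu is given as a map on addresses; only its values on
   the root and the leaves of t are used.
   z(T, mu) = sum over labelings lambda agreeing with mu on root and leaves. *)
Definition zsum {R : comPzRingType} (n : nat) (a : 'I_n -> 'I_n -> R)
    (t : ptree) (mu : seq nat -> 'I_n) : R :=
  \sum_(lam : {ffun vtx t -> 'I_n} |
          [forall v : vtx t, (is_root v || is_leaf v) ==> (lam v == mu (val v))])
     weight a lam.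

(* fern_{d,k}: path v_0 ... v_k, each v_m (m < k) has d children, the leftmost
   being v_{m+1}, the other d-1 being leaves; v_k is a leaf. *)
Fixpoint fern (d k : nat) : ptree :=
  match k with
  | 0 => Node [::]
  | k'.+1 => Node (fern d k' :: nseq d.-1 (Node [::]))
  end.

(* mu(i,j,l) on fern_{d,n}: root -> i, leaf v_n (address nseq n 0) -> j,
   every other leaf -> l. *)
Definition mu_fern (n : nat) (i j l : 'I_n) (p : seq nat) : 'I_n :=
  if p == [::] then i else if p == nseq n 0%N then j else l.

Definition avar (n : nat) (u v : 'I_n) : {mpoly rat[n * n]} :=
  'X_(mxvec_index u v).

Definition Bmat (n d : nat) (l : 'I_n) : 'M[{mpoly rat[n * n]}]_n :=
  \matrix_(u < n, v < n) (avar u v * avar u l ^+ d.-1).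

From HB Require Import structures.
From mathcomp Require Import all_boot all_order all_algebra.
From mathcomp Require Import mpoly ring.
From Stdlib Require Import FunctionalExtensionality.
Set Implicit Arguments.
Unset Strict Implicit.
Unset Printing Implicit Defensive.
Import GRing.Theory.
Local Open Scope ring_scope.

(** The proof peels the fern from its root.  In [fern_{d,k+1}] the root carries
    the fixed label x, its d-1 leaf children carry l, and its remaining child
    v_1 is the root of a copy of [fern_{d,k}] whose leaves carry the same
    labels; summing over the label y of v_1 gives
      z_{k+1}(x) = sum_y a_{x,y} a_{x,l}^(d-1) z_k(y) = sum_y B_{x,y} z_k(y),
    while z_0(x) = [x = j], so z_n(i) = (B^n)_{i,j}.  To carry out the sums,
    labelings of the finite type of vertices are replaced by functions on
    vertex addresses, and sums over them by iterated sums over a list of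
    addresses. *)

Lemma big_seq_sub (T : choiceType) (s : seq T) (Us : uniq s) (R : Type) (idx : R) op
    (P : pred T) (F : T -> R) :
  \big[op/idx]_(v : seq_sub s | P (val v)) F (val v) = \big[op/idx]_(p <- s | P p) F p.
Proof. by rewrite -[in RHS](val_seq_sub_enum Us) big_map /index_enum !unlock. Qed.

Lemma forall_seq_sub (T : choiceType) (s : seq T) (Q : pred T) :
  [forall v : seq_sub s, Q (val v)] = all Q s.
Proof.
apply/forallP/allP => [Qs x xs | Qs v]; first exact: (Qs (SeqSub xs)).
exact/Qs/ssvalP.
Qed.

Section IteratedLabelingSums.
Variables (R : comPzRingType) (T : eqType) (n : nat) (y0 : 'I_n).
Implicit Types (s : seq T) (g : T -> 'I_n) (H : (T -> 'I_n) -> R).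

Definition relabel g x y : T -> 'I_n := fun p => if p == x then y else g p.

(* For [uniq s], the sum of [H g] over all labelings [g] of the points of [s];
   points outside [s] carry the junk label [y0]. *)
Fixpoint sum_labelings s H : R :=
  if s is x :: s' then \sum_(y : 'I_n) sum_labelings s' (fun g => H (relabel g x y))
  else H (fun _ => y0).

Lemma relabel_at g x y : relabel g x y x = y.
Proof. by rewrite /relabel eqxx. Qed.

Lemma eq_sum_labelings s H H' : H =1 H' -> sum_labelings s H = sum_labelings s H'.
Proof.
elim: s H H' => [|x s IHs] H H' eqH /=; first exact: eqH.
by apply: eq_bigr => y _; apply: IHs => g; apply: eqH.
Qed.

Lemma mulr_sum_labelings s c H :
  c * sum_labelings s H = sum_labelings s (fun g => c * H g).
Proof.
elim: s H => [|x s IHs] H //=.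
by rewrite mulr_sumr; apply: eq_bigr => y _; apply: IHs.
Qed.

Lemma exchange_sum_labelings s (F : 'I_n -> (T -> 'I_n) -> R) :
  sum_labelings s (fun g => \sum_(y : 'I_n) F y g) = \sum_(y : 'I_n) sum_labelings s (F y).
Proof.
elim: s F => [|x s IHs] F //=.
under eq_bigr => z _ do rewrite (IHs (fun y g => F y (relabel g x z))).
exact: exchange_big.
Qed.

Lemma sum_indicator_mull (F : 'I_n -> R) x : \sum_(y : 'I_n) (y == x)%:R * F y = F x.
Proof.
under eq_bigr do rewrite mulr_natl mulrb.
by rewrite -big_mkcond big_pred1_eq.
Qed.

Lemma sum_labelings_cons_fixed x s c H :
  sum_labelings (x :: s) (fun g => (g x == c)%:R * H g) =
  sum_labelings s (fun g => H (relabel g x c)).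
Proof.
rewrite /=; under eq_bigr => y _ do under eq_sum_labelings => g do rewrite relabel_at.
under eq_bigr => y _ do rewrite -mulr_sum_labelings.
exact: sum_indicator_mull.
Qed.

Definition mix s1 g1 g2 : T -> 'I_n := fun p => if p \in s1 then g1 p else g2 p.

Lemma sum_labelings_cat s1 s2 H :
  sum_labelings (s1 ++ s2) H =
  sum_labelings s1 (fun g1 => sum_labelings s2 (fun g2 => H (mix s1 g1 g2))).
Proof.
elim: s1 H => [|x s1 IHs] H /=; first exact: eq_sum_labelings.
apply: eq_bigr => y _; rewrite IHs.
apply: eq_sum_labelings => g1; apply: eq_sum_labelings => g2; congr H.
by apply: functional_extensionality => p; rewrite /mix /relabel inE; case: eqP.
Qed.

Definition depends_only_on s (F : (T -> 'I_n) -> R) :=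
  forall g g', {in s, g =1 g'} -> F g = F g'.

Lemma sum_labelings_cat_mul s1 s2 F G :
  {in s2, forall p, p \notin s1} ->
  depends_only_on s1 F -> depends_only_on s2 G ->
  sum_labelings (s1 ++ s2) (fun g => F g * G g) = sum_labelings s1 F * sum_labelings s2 G.
Proof.
move=> s12 dF dG; rewrite sum_labelings_cat mulrC mulr_sum_labelings.
apply: eq_sum_labelings => g1; rewrite mulrC mulr_sum_labelings.
apply: eq_sum_labelings => g2; congr (_ * _).
  by apply: dF => p p1; rewrite /mix p1.
by apply: dG => p p2; rewrite /mix (negPf (s12 p p2)).
Qed.

Lemma sum_labelings_fixed s c F : uniq s ->
  sum_labelings s (fun g => (all (fun p => g p == c p) s)%:R * F g) =
  F (fun p => if p \in s then c p else y0).
Proof.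
elim: s F => [|x s IHs] F; first by rewrite /= mul1r.
rewrite cons_uniq => /andP[xs Us].
have -> : (fun p => if p \in x :: s then c p else y0) =
          relabel (fun p => if p \in s then c p else y0) x (c x).
  by apply: functional_extensionality => p; rewrite /relabel inE; case: eqP => [->|].
rewrite -(IHs (fun g => F (relabel g x (c x))) Us).
transitivity (sum_labelings (x :: s)
  (fun g => (g x == c x)%:R * ((all (fun p => g p == c p) s)%:R * F g))).
  by apply: eq_sum_labelings => g; rewrite mulrA -natrM mulnb.
rewrite sum_labelings_cons_fixed; apply: eq_sum_labelings => g.
congr (_%:R * _); apply: congr1; apply: eq_in_all => p ps.
have px : p != x by apply: contraNneq xs => <-.
by rewrite /relabel (negPf px).
Qed.

End IteratedLabelingSums.

Definition lift_cons (T : eqType) n (y0 : 'I_n) (m : T) (g : seq T -> 'I_n) : seq T -> 'I_n :=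
  fun p => if p is m' :: p' then if m' == m then g p' else y0 else y0.

Lemma sum_labelings_map_cons (R : comPzRingType) (T : eqType) n (y0 : 'I_n) (m : T) s
    (H : (seq T -> 'I_n) -> R) :
  sum_labelings y0 [seq m :: p | p <- s] H =
  sum_labelings y0 s (fun g => H (lift_cons y0 m g)).
Proof.
elim: s H => [|x s IHs] H /=.
  by congr H; apply: functional_extensionality => -[|m' p] //=; case: ifP.
apply: eq_bigr => y _; rewrite IHs; apply: eq_sum_labelings => g; congr H.
apply: functional_extensionality => -[|m' p] //=.
by rewrite /relabel /lift_cons eqseq_cons; case: (m' == m).
Qed.

Section LabelingSumsAsFfunSums.
Variables (R : comPzRingType) (T : choiceType) (n : nat) (y0 : 'I_n).
Implicit Types (s : seq T) (H : (T -> 'I_n) -> R).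

Definition extend_labeling s (lam : {ffun seq_sub s -> 'I_n}) : T -> 'I_n :=
  fun p => if insub p is Some v then lam v else y0.

Lemma extend_labeling_val s (lam : {ffun seq_sub s -> 'I_n}) v :
  extend_labeling lam (val v) = lam v.
Proof. by rewrite /extend_labeling valK. Qed.

Lemma extend_labeling_notin s (lam : {ffun seq_sub s -> 'I_n}) p :
  p \notin s -> extend_labeling lam p = y0.
Proof. by move=> ps; rewrite /extend_labeling insubF //; apply/negbTE. Qed.

Lemma sum_ffun_seq_sub_cons x s H : x \notin s ->
  \sum_(lam : {ffun seq_sub (x :: s) -> 'I_n}) H (extend_labeling lam) =
  \sum_(y : 'I_n) \sum_(lam : {ffun seq_sub s -> 'I_n})
     H (relabel (extend_labeling lam) x y).
Proof.
move=> xs; rewrite pair_big /=.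
have embP (w : seq_sub s) : val w \in x :: s by rewrite inE (ssvalP w) orbT.
pose phi (ylam : 'I_n * {ffun seq_sub s -> 'I_n}) : {ffun seq_sub (x :: s) -> 'I_n} :=
  [ffun v => relabel (extend_labeling ylam.2) x ylam.1 (val v)].
pose psi (lam : {ffun seq_sub (x :: s) -> 'I_n}) :=
  (lam (SeqSub (mem_head x s)), [ffun w => lam (SeqSub (embP w))]).
have phiK : cancel phi psi.
  move=> [y lam]; rewrite /psi /phi ffunE /= relabel_at; congr pair.
  apply/ffunP => w; rewrite !ffunE /relabel /=.
  have -> : (ssval w == x) = false by apply: contraNF xs => /eqP <-; apply: ssvalP.
  exact: extend_labeling_val.
have psiK : cancel psi phi.
  move=> lam; apply/ffunP => v; rewrite /phi /psi !ffunE /relabel /=.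
  case: eqP => [vx | /eqP vx]; first by congr (lam _); apply: val_inj.
  have vs : val v \in s by move: (ssvalP v); rewrite inE (negPf vx).
  by rewrite -[val v]/(val (SeqSub vs)) extend_labeling_val ffunE; congr (lam _); apply: val_inj.
rewrite (reindex phi); last by exists psi => ? _; [apply: phiK | apply: psiK].
apply: eq_bigr => -[y lam] _; congr H; apply: functional_extensionality => p.
case: (boolP (p \in x :: s)) => [pxs | ].
  by rewrite -[p]/(val (SeqSub pxs)) extend_labeling_val ffunE.
rewrite inE negb_or => /andP[px ps].
by rewrite /relabel /= (negPf px) !extend_labeling_notin // inE negb_or px.
Qed.

Lemma sum_ffun_seq_sub s H : uniq s ->
  \sum_(lam : {ffun seq_sub s -> 'I_n}) H (extend_labeling lam) = sum_labelings y0 s H.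
Proof.
elim: s H => [|x s IHs] H.
  move=> _; rewrite /= (eq_bigr (fun=> H (fun=> y0))) => [|lam _].
    by rewrite sumr_const card_ffun card_seq_sub // expn0.
  by congr H; apply: functional_extensionality => p; apply: extend_labeling_notin.
rewrite cons_uniq => /andP[xs Us]; rewrite sum_ffun_seq_sub_cons //=.
by apply: eq_bigr => y _; apply: IHs.
Qed.

End LabelingSumsAsFfunSums.

Definition childless (W : seq (seq nat)) (p : seq nat) : bool :=
  all (fun q => ~~ is_child p q) W.

Definition root_leaves_ok n (W : seq (seq nat)) (mu g : seq nat -> 'I_n) : bool :=
  all (fun p => ((p == [::]) || childless W p) ==> (g p == mu p)) W.

Definition weight_on (R : comPzRingType) n (a : 'I_n -> 'I_n -> R)
    (W : seq (seq nat)) (g : seq nat -> 'I_n) : R :=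
  \prod_(p <- W) \prod_(q <- W | is_child p q) a (g p) (g q).

Lemma weight_on_congr (R : comPzRingType) n (a : 'I_n -> 'I_n -> R) W g g' :
  {in W, g =1 g'} -> weight_on a W g = weight_on a W g'.
Proof.
move=> eqg; apply: eq_big_seq => p pW.
rewrite big_seq_cond [RHS]big_seq_cond; apply: eq_bigr => q /andP[qW _].
by rewrite !eqg.
Qed.

Lemma zsum_sum_labelings (R : comPzRingType) n (a : 'I_n -> 'I_n -> R) (y0 : 'I_n)
    (t : ptree) (mu : seq nat -> 'I_n) : uniq (vertices t) ->
  zsum a t mu = sum_labelings y0 (vertices t)
    (fun g => (root_leaves_ok (vertices t) mu g)%:R * weight_on a (vertices t) g).
Proof.
move=> Ut; rewrite /zsum big_mkcond -sum_ffun_seq_sub //; apply: eq_bigr => lam _.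
have -> : weight a lam = weight_on a (vertices t) (extend_labeling y0 lam).
  rewrite /weight /weight_on -(big_seq_sub Ut _ _ xpredT); apply: eq_bigr => v _.
  rewrite -(big_seq_sub Ut _ _ (is_child (val v))); apply: eq_bigr => u _.
  by rewrite !extend_labeling_val.
rewrite /root_leaves_ok -forall_seq_sub.
under [in RHS]eq_forallb => v do
  rewrite /childless -(forall_seq_sub _ (fun q => ~~ is_child (val v) q)) extend_labeling_val.
by case: ifP; rewrite ?mul1r ?mul0r.
Qed.

Lemma vertices_nil_head (t : ptree) : vertices t = [::] :: behead (vertices t).
Proof. by case: t. Qed.

Section FernVertices.
Variable d : nat.
Local Notation V k := (vertices (fern d k)).
Local Notation side_leaves := [seq [:: m] | m <- iota 1 d.-1].

Lemma vertices_fern_succ k :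
  V k.+1 = [::] :: [seq 0%N :: p | p <- V k] ++ side_leaves.
Proof.
rewrite [fern _ _]/= [vertices _]/=; congr (_ :: (_ ++ _)).
by elim: d.-1 1%N => //= m IHm s; rewrite IHm.
Qed.

Lemma all_vertices_fern_succ k (P : pred (seq nat)) :
  all P (V k.+1) =
  [&& P [::], all (fun p => P (0%N :: p)) (V k) & all (fun m => P [:: m]) (iota 1 d.-1)].
Proof. by rewrite vertices_fern_succ /= all_cat !all_map. Qed.

Lemma prod_vertices_fern_succ (R : pzSemiRingType) k (P : pred (seq nat))
    (F : seq nat -> R) :
  \prod_(p <- V k.+1 | P p) F p =
  (if P [::] then F [::] else 1) *
    ((\prod_(p <- V k | P (0%N :: p)) F (0%N :: p)) *
      \prod_(m <- iota 1 d.-1 | P [:: m]) F [:: m]).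
Proof. by rewrite vertices_fern_succ big_cons big_cat !big_map; case: (P [::]); rewrite ?mul1r. Qed.

Lemma uniq_vertices_fern k : uniq (V k).
Proof.
have inj0 : injective (fun p : seq nat => 0%N :: p) by move=> ? ? [].
have inj1 : injective (fun m : nat => [:: m]) by move=> ? ? [].
elim: k => [|k IHk] //; rewrite vertices_fern_succ cons_uniq mem_cat negb_or cat_uniq.
rewrite !map_inj_uniq // IHk iota_uniq /=; apply/and3P; split.
- by apply/andP; split; apply/mapP => -[].
- apply/hasPn => q /mapP[m]; rewrite mem_iota => /andP[m_gt0 _] ->.
  by apply/mapP => -[p _ [m0]]; rewrite m0 in m_gt0.
- done.
Qed.

Lemma nil_notin_behead_vertices_fern k : [::] \notin behead (V k).
Proof. by have := uniq_vertices_fern k; rewrite (vertices_nil_head (fern d k)) /= => /andP[]. Qed.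

Lemma childless_fern_nil k : childless (V k.+1) [::] = false.
Proof.
by rewrite /childless vertices_fern_succ /= all_cat all_map (vertices_nil_head (fern d k)).
Qed.

Lemma is_child_cons2 m p q : is_child (m :: p) (m :: q) = is_child p q.
Proof. by rewrite /is_child /= eqseq_cons eqxx. Qed.

Lemma childless_fern_cons0 k p : childless (V k.+1) (0%N :: p) = childless (V k) p.
Proof.
rewrite /childless vertices_fern_succ /= all_cat !all_map.
under eq_all do rewrite /= is_child_cons2.
by rewrite [X in _ && X]all_predT ?andbT.
Qed.

Lemma childless_fern_side k m : (0 < m)%N -> childless (V k.+1) [:: m].
Proof.
move=> m_gt0; rewrite /childless vertices_fern_succ /= all_cat !all_map.
apply/andP; split; apply/allP => p _ //=.
by rewrite /is_child /= eqseq_cons; case: m m_gt0 => //= m _; rewrite andbF.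
Qed.

End FernVertices.

Section FernSums.
Variables (R : comPzRingType) (n : nat) (a : 'I_n -> 'I_n -> R) (y0 : 'I_n).
Variables (d : nat) (j l : 'I_n).
Local Notation V k := (vertices (fern d k)).
Local Notation side_leaves := [seq [:: m] | m <- iota 1 d.-1].

Definition fern_label k (p : seq nat) : 'I_n := if p == nseq k 0%N then j else l.

Definition fern_leaves_ok k (g : seq nat -> 'I_n) : bool :=
  all (fun p => childless (V k) p ==> (g p == fern_label k p)) (V k).

(* z(fern_{d,k}) with root label x, leaf v_k labelled j and the other leaves
   labelled l; unlike [zsum], this keeps the root label free when k = 0, where
   the root is itself the leaf v_k. *)
Definition zfern k (x : 'I_n) : R := sum_labelings y0 (V k)
  (fun g => (g [::] == x)%:R * ((fern_leaves_ok k g)%:R * weight_on a (V k) g)).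

Definition fern_mx : 'M[R]_n := \matrix_(u, v) (a u v * a u l ^+ d.-1).

Lemma fern_leaves_ok_congr k g g' :
  {in V k, g =1 g'} -> fern_leaves_ok k g = fern_leaves_ok k g'.
Proof. by move=> eqg; apply: eq_in_all => p pV; rewrite eqg. Qed.

Lemma fern_leaves_ok_succ k g :
  fern_leaves_ok k.+1 g =
  fern_leaves_ok k (fun p => g (0%N :: p)) && all (fun p => g p == l) side_leaves.
Proof.
rewrite /fern_leaves_ok all_vertices_fern_succ childless_fern_nil implyFb andTb all_map.
congr andb.
  by apply: eq_all => p; rewrite childless_fern_cons0 /fern_label /= eqseq_cons eqxx.
apply: eq_in_all => m; rewrite mem_iota => /andP[m_gt0 _].
by rewrite childless_fern_side // /fern_label /= eqseq_cons; case: m m_gt0.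
Qed.

Lemma weight_on_fern_succ k g :
  weight_on a (V k.+1) g =
  a (g [::]) (g [:: 0%N]) * \prod_(p <- side_leaves) a (g [::]) (g p) *
  weight_on a (V k) (fun p => g (0%N :: p)).
Proof.
have child_nil p : is_child p [::] = false by [].
have side_childless m p : (0 < m)%N -> is_child [:: m] (0%N :: p) = false.
  by case: m => // m _; rewrite /is_child /= andbF.
have root_side m : is_child [::] [:: m] = true by [].
have root_cons0 p : is_child [::] (0%N :: p) = (p == [::]) by case: p.
rewrite /weight_on prod_vertices_fern_succ; congr (_ * _).
  rewrite prod_vertices_fern_succ child_nil mul1r (vertices_nil_head (fern d k)) big_cons.
  rewrite root_cons0 eqxx -mulrA big_map; congr (_ * _).
  rewrite big1_seq ?mul1r; last first.
    move=> p /andP[]; rewrite root_cons0 => /eqP -> pV.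
    by case/negP: (nil_notin_behead_vertices_fern d k).
  by apply: eq_bigl => m; rewrite root_side.
rewrite [X in _ * X](_ : _ = 1) ?mulr1; last first.
  rewrite big_seq big1 // => m; rewrite mem_iota => /andP[m_gt0 _].
  rewrite prod_vertices_fern_succ child_nil mul1r.
  rewrite big_pred0; last by move=> p; rewrite side_childless.
  by rewrite big_pred0 ?mulr1.
apply: eq_bigr => p _; rewrite prod_vertices_fern_succ child_nil mul1r.
under eq_bigl do rewrite is_child_cons2.
by rewrite [X in _ * X]big_pred0 ?mulr1.
Qed.

Lemma zfern0 x : zfern 0 x = (x == j)%:R.
Proof.
rewrite /zfern [V 0]/= sum_labelings_cons_fixed /= /fern_leaves_ok /weight_on /childless.
by rewrite /fern_label !big_cons !big_nil /= relabel_at andbT mulr1 mulr1.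
Qed.

Lemma sum_labelings_side_leaves x :
  sum_labelings y0 side_leaves
    (fun g => (all (fun p => g p == l) side_leaves)%:R * \prod_(p <- side_leaves) a x (g p)) =
  a x l ^+ d.-1.
Proof.
have uniq_side : uniq side_leaves by rewrite map_inj_uniq ?iota_uniq // => ? ? [].
rewrite (sum_labelings_fixed _ (fun=> l)) // (eq_big_seq (fun=> a x l)) => [|p ->] //.
by rewrite big_const_seq count_predT size_map size_iota iter_mulr_1.
Qed.

Lemma zfern_succ k x : zfern k.+1 x = \sum_(y : 'I_n) fern_mx x y * zfern k y.
Proof.
pose inner g := (fern_leaves_ok k (fun p => g (0%N :: p)))%:R *
  (a x (g [:: 0%N]) * weight_on a (V k) (fun p => g (0%N :: p))).
pose side g := (all (fun p => g p == l) side_leaves)%:R * \prod_(p <- side_leaves) a x (g p).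
transitivity (sum_labelings y0 ([seq 0%N :: p | p <- V k] ++ side_leaves)
  (fun g => inner g * side g)).
  rewrite {1}/zfern.
  under eq_sum_labelings => g do rewrite fern_leaves_ok_succ weight_on_fern_succ.
  rewrite vertices_fern_succ sum_labelings_cons_fixed.
  apply: eq_sum_labelings => g; rewrite /inner /side /relabel /= !all_map !big_map /=.
  by rewrite -mulnb natrM; ring.
have side_notin : {in side_leaves, forall p, p \notin [seq 0%N :: q | q <- V k]}.
  move=> q /mapP[m]; rewrite mem_iota => /andP[m_gt0 _] ->.
  by apply/mapP => -[q' _ [m0]]; rewrite m0 in m_gt0.
have inner_dep : depends_only_on [seq 0%N :: q | q <- V k] inner.
  move=> g g' eqg; have eqg0 : {in V k, (fun p => g (0%N :: p)) =1 (fun p => g' (0%N :: p))}.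
    by move=> p pV; apply/eqg/map_f.
  rewrite /inner (fern_leaves_ok_congr eqg0) (weight_on_congr _ eqg0) eqg0 //.
  by rewrite (vertices_nil_head (fern d k)) mem_head.
have side_dep : depends_only_on side_leaves side.
  move=> g g' eqg; rewrite /side (eq_big_seq _ (fun p ps => congr1 _ (eqg p ps))).
  by congr (_%:R * _); apply: congr1; apply: eq_in_all => p ps; rewrite eqg.
rewrite sum_labelings_cat_mul // sum_labelings_map_cons /side sum_labelings_side_leaves.
rewrite /inner mulrC mulr_sum_labelings.
under [RHS]eq_bigr => y _ do rewrite mxE /zfern mulr_sum_labelings.
rewrite -exchange_sum_labelings; apply: eq_sum_labelings => g.
under eq_bigr => y _ do rewrite eq_sym mulrC -mulrA.
by rewrite sum_indicator_mull /lift_cons /=; ring.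
Qed.

Lemma zfern_mx k x : zfern k x = (fern_mx ^+ k) x j.
Proof.
elim: k x => [|k IHk] x; first by rewrite zfern0 expr0 mxE eq_sym.
rewrite zfern_succ exprS -mulmxE mxE; apply: eq_bigr => y _.
by rewrite IHk.
Qed.

Lemma root_leaves_ok_fern i g :
  root_leaves_ok (V n) (mu_fern i j l) g = (g [::] == i) && fern_leaves_ok n g.
Proof.
have n_gt0 : (0 < n)%N by case: i => m /(leq_ltn_trans (leq0n m)).
have root_inner : childless (V n) [::] = false.
  by have := childless_fern_nil d n.-1; rewrite prednK.
have all_V (P : pred (seq nat)) : all P (V n) = P [::] && all P (behead (V n)).
  by rewrite {1}(vertices_nil_head (fern d n)).
rewrite /root_leaves_ok /fern_leaves_ok !all_V root_inner /= {1}/mu_fern eqxx.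
congr andb; apply: eq_in_all => p pV.
have p_nil : (p == [::]) = false.
  by apply/negbTE; apply: contraNneq (nil_notin_behead_vertices_fern d n) => <-.
by rewrite /mu_fern p_nil.
Qed.

End FernSums.

Unset Implicit Arguments.
Set Strict Implicit.

Theorem mainTheorem3 (d n : nat) (hd : (1 <= d)%N) (hn : (1 <= n)%N)
    (i j l : 'I_n) :
  zsum (@avar n) (fern d n) (mu_fern i j l) = (Bmat d l ^+ n) i j.
Proof.
rewrite (zsum_sum_labelings _ i) ?uniq_vertices_fern //.
under eq_sum_labelings => g do rewrite root_leaves_ok_fern -mulnb natrM -mulrA.
exact: (zfern_mx (@avar n) i d j l n i).
Qed.
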